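(* Let $A$ be a unital C*-algebra and let $pMO(A)$ be the locale presented by the site $\mathcal{C}(A)\ltimes\Sigma$ described in the context. Then the points of $pMO(A)$ are in one-to-one correspondence with the consistent ideals of partial measurement outcomes of $A$. Explicitly: a point $\tau$ (completely prime filter) corresponds to the family indexed by $I_\tau=\{C\in\mathcal{C}(A) : (C,\Sigma(C))\in\tau\}$, where for $C\in I_\tau$ the character $\sigma_C\in\Sigma(C)$ is the unique character with $\{u : (C,u)\in\tau\}=\{u\in\mathcal{O}(\Sigma(C)) : \sigma_C\in u\}$; conversely, a consistent ideal $(C_i,\sigma_i)_{i}$ corresponds to the point $\{(C_i,u) : \sigma_i\in u\}$.
   Context: Work classically in Sets. $A$ is a unital C*-algebra; $\mathcal{C}(A)$ denotes the set of commutative unital C*-subalgebras of $A$, partially ordered by inclusion. For $C\in\mathcal{C}(A)$, $\Sigma(C)$ is its Gelfand spectrum (the compact Hausdorff space of characters of $C$) and $\mathcal{O}(\Sigma(C))$ its lattice of open sets. For $C\subseteq D$ in $\mathcal{C}(A)$, $r_{D,C}:\Sigma(D)\to\Sigma(C)$ is restriction of characters (continuous). The site $\mathcal{C}(A)\ltimes\Sigma$: objects are pairs $(C,u)$ with $C\in\mathcal{C}(A)$, $u\in\mathcal{O}(\Sigma(C))$; order $(D,v)\le(C,u)$ iff $C\subseteq D$ and $v\subseteq r_{D,C}^{-1}(u)$; covering relation $(C,u)\lhd\{(D_i,v_i)\}_{i\in I}$ iff $C\subseteq D_i$ for all $i$ and $u\subseteq\bigcup\{v_i : i\in I, D_i=C\}$.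 The locale presented by such a site has as frame the down-closed subsets $U$ of the poset such that $x\lhd S\subseteq U$ implies $x\in U$. A point of it is a completely prime filter: an inhabited, up-closed subset $\tau$ such that any two elements of $\tau$ have a common lower bound in $\tau$, and whenever $x\in\tau$ and $x\lhd S$ then $S\cap\tau\neq\emptyset$. A partial measurement outcome is a pair $(C,\sigma)$ with $C\in\mathcal{C}(A)$ and $\sigma\in\Sigma(C)$. A consistent ideal of partial measurement outcomes is a family $(C_i,\sigma_i)_{i}$ of partial measurement outcomes such that $\{C_i\}$ is an ideal of $\mathcal{C}(A)$ (nonempty, down-closed, and directed under inclusion), each $C_i$ occurs with exactly one $\sigma_i$, and $C_i\subseteq C_j$ implies $\sigma_i=\sigma_j|_{C_i}$. *)

From Stdlib Require Import Reals List.
Open Scope R_scope.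

Record Cplx := mkC { Cre : R ; Cim : R }.
Definition C0 : Cplx := mkC 0 0.
Definition C1 : Cplx := mkC 1 0.
Definition Cadd (z w : Cplx) : Cplx := mkC (Cre z + Cre w) (Cim z + Cim w).
Definition Copp (z : Cplx) : Cplx := mkC (- Cre z) (- Cim z).
Definition Csub (z w : Cplx) : Cplx := Cadd z (Copp w).
Definition Cmul (z w : Cplx) : Cplx :=
  mkC (Cre z * Cre w - Cim z * Cim w) (Cre z * Cim w + Cim z * Cre w).
Definition Cconj (z : Cplx) : Cplx := mkC (Cre z) (- Cim z).
Definition Cabs (z : Cplx) : R := sqrt (Cre z * Cre z + Cim z * Cim z).

Record CStarAlg := {
  car :> Type;
  zero : car; one : car;
  add : car -> car -> car; opp : car -> car; mul : car -> car -> car;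
  smul : Cplx -> car -> car; star : car -> car; norm : car -> R;
  addA : forall x y z, add x (add y z) = add (add x y) z;
  addC : forall x y, add x y = add y x;
  add0 : forall x, add zero x = x;
  addN : forall x, add (opp x) x = zero;
  smulA : forall a b x, smul a (smul b x) = smul (Cmul a b) x;
  smul1 : forall x, smul C1 x = x;
  smulDr : forall a x y, smul a (add x y) = add (smul a x) (smul a y);
  smulDl : forall a b x, smul (Cadd a b) x = add (smul a x) (smul b x);
  mulA : forall x y z, mul x (mul y z) = mul (mul x y) z;
  mul1l : forall x, mul one x = x;
  mul1r : forall x, mul x one = x;
  mulDl : forall x y z, mul (add x y) z = add (mul x z) (mul y z);
  mulDr : forall x y z, mul x (add y z) = add (mul x y) (mul x z);
  smulMl : forall a x y, smul a (mul x y) = mul (smul a x) y;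
  smulMr : forall a x y, smul a (mul x y) = mul x (smul a y);
  starK : forall x, star (star x) = x;
  starD : forall x y, star (add x y) = add (star x) (star y);
  starZ : forall a x, star (smul a x) = smul (Cconj a) (star x);
  starM : forall x y, star (mul x y) = mul (star y) (star x);
  norm_ge0 : forall x, 0 <= norm x;
  norm_eq0 : forall x, norm x = 0 -> x = zero;
  normZ : forall a x, norm (smul a x) = Cabs a * norm x;
  normD : forall x y, norm (add x y) <= norm x + norm y;
  normM : forall x y, norm (mul x y) <= norm x * norm y;
  cstar_id : forall x, norm (mul (star x) x) = norm x * norm x;
  complete : forall s : nat -> car,
    (forall eps, 0 < eps -> exists N, forall m n, (N <= m)%nat -> (N <= n)%nat ->
        norm (add (s m) (opp (s n))) < eps) ->
    exists l, forall eps, 0 < eps -> exists N, forall n, (N <= n)%nat ->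
        norm (add (s n) (opp l)) < eps
}.

Arguments zero {c}. Arguments one {c}. Arguments add {c}. Arguments opp {c}.
Arguments mul {c}. Arguments smul {c}. Arguments star {c}. Arguments norm {c}.

Definition is_comm_sub (A : CStarAlg) (C : A -> Prop) : Prop :=
  C one /\
  (forall x y, C x -> C y -> C (add x y)) /\
  (forall a x, C x -> C (smul a x)) /\
  (forall x y, C x -> C y -> C (mul x y)) /\
  (forall x, C x -> C (star x)) /\
  (forall (s : nat -> A) l, (forall n, C (s n)) ->
     (forall eps, 0 < eps -> exists N, forall n, (N <= n)%nat ->
         norm (add (s n) (opp l)) < eps) -> C l) /\
  (forall x y, C x -> C y -> mul x y = mul y x).

Definition subset {A : CStarAlg} (C D : A -> Prop) : Prop := forall x, C x -> D x.

Definition is_char (A : CStarAlg) (C : A -> Prop) (s : sig C -> Cplx) : Prop :=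
  (forall x y z : sig C, proj1_sig z = add (proj1_sig x) (proj1_sig y) ->
      s z = Cadd (s x) (s y)) /\
  (forall (a : Cplx) (x z : sig C), proj1_sig z = smul a (proj1_sig x) ->
      s z = Cmul a (s x)) /\
  (forall x y z : sig C, proj1_sig z = mul (proj1_sig x) (proj1_sig y) ->
      s z = Cmul (s x) (s y)) /\
  (exists x, s x <> C0).

Definition Spec (A : CStarAlg) (C : A -> Prop) : (sig C -> Cplx) -> Prop :=
  is_char A C.

(* Open subsets of Sigma(C) for the Gelfand (weak-* ) topology:
   subsets of Sigma(C) that are neighbourhoods of each of their points,
   basic neighbourhoods being
   { t in Sigma(C) | |t(x_i) - s(x_i)| < eps for finitely many x_i }. *)
Definition is_open (A : CStarAlg) (C : A -> Prop) (u : (sig C -> Cplx) -> Prop) : Prop :=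
  (forall s, u s -> is_char A C s) /\
  (forall s, u s -> exists (l : list (sig C)) (eps : R), 0 < eps /\
     forall t, is_char A C t ->
       (forall x, In x l -> Cabs (Csub (t x) (s x)) < eps) -> u t).

Definition restr {A : CStarAlg} {C D : A -> Prop} (h : subset C D)
  (t : sig D -> Cplx) : sig C -> Cplx :=
  fun x => t (exist D (proj1_sig x) (h (proj1_sig x) (proj2_sig x))).

Record sobj (A : CStarAlg) := SObj { so_C : A -> Prop ; so_u : (sig so_C -> Cplx) -> Prop }.
Arguments SObj {A}. Arguments so_C {A}. Arguments so_u {A}.

Definition valid_obj (A : CStarAlg) (x : sobj A) : Prop :=
  is_comm_sub A (so_C x) /\ is_open A (so_C x) (so_u x).

Definition sle (A : CStarAlg) (y x : sobj A) : Prop :=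
  exists h : subset (so_C x) (so_C y),
    forall t, so_u y t -> so_u x (restr h t).

(* x ◁ S  iff  C ⊆ D for all (D,v) in S, and u ⊆ ⋃ { v : (D,v) ∈ S, D = C }
   (given C ⊆ D, the extra inclusion D ⊆ C expresses D = C, and the
   restriction along it is the identification Σ(C) = Σ(D)). *)
Definition covers (A : CStarAlg) (x : sobj A) (S : sobj A -> Prop) : Prop :=
  valid_obj A x /\ (forall y, S y -> valid_obj A y) /\
  (forall y, S y -> subset (so_C x) (so_C y)) /\
  (forall s, so_u x s -> exists y, S y /\
     exists h : subset (so_C y) (so_C x), so_u y (restr h s)).

Definition is_point (A : CStarAlg) (tau : sobj A -> Prop) : Prop :=
  (forall x, tau x -> valid_obj A x) /\
  (exists x, tau x) /\
  (forall x y, tau y -> valid_obj A x -> sle A y x -> tau x) /\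
  (forall x y, tau x -> tau y -> exists z, tau z /\ sle A z x /\ sle A z y) /\
  (forall x S, tau x -> covers A x S -> exists y, S y /\ tau y).

Record pmo (A : CStarAlg) := PMO { pm_C : A -> Prop ; pm_s : sig pm_C -> Cplx }.
Arguments PMO {A}. Arguments pm_C {A}. Arguments pm_s {A}.

Definition valid_pmo (A : CStarAlg) (p : pmo A) : Prop :=
  is_comm_sub A (pm_C p) /\ is_char A (pm_C p) (pm_s p).

(* A consistent ideal of partial measurement outcomes, as the set F of its
   members (C_i, sigma_i). *)
Definition consistent_ideal (A : CStarAlg) (F : pmo A -> Prop) : Prop :=
  (forall p, F p -> valid_pmo A p) /\
  (exists p, F p) /\
  (forall p (C : A -> Prop), F p -> is_comm_sub A C -> subset C (pm_C p) ->
     exists q, F q /\ (forall a, pm_C q a <-> C a)) /\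
  (forall p q, F p -> F q -> exists r, F r /\
     subset (pm_C p) (pm_C r) /\ subset (pm_C q) (pm_C r)) /\
  (* each C_i occurs with exactly one sigma_i *)
  (forall p q, F p -> F q -> forall (h : subset (pm_C p) (pm_C q)),
     subset (pm_C q) (pm_C p) -> pm_s p = restr h (pm_s q)) /\
  (forall p q, F p -> F q -> forall (h : subset (pm_C p) (pm_C q)),
     pm_s p = restr h (pm_s q)).

Definition point_to_ideal (A : CStarAlg) (tau : sobj A -> Prop) : pmo A -> Prop :=
  fun p => tau (SObj (pm_C p) (Spec A (pm_C p))) /\
    is_char A (pm_C p) (pm_s p) /\
    (forall u, is_open A (pm_C p) u ->
       (tau (SObj (pm_C p) u) <-> u (pm_s p))).

Definition ideal_to_point (A : CStarAlg) (F : pmo A -> Prop) : sobj A -> Prop :=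
  fun x => is_open A (so_C x) (so_u x) /\
    exists s, F (PMO (so_C x) s) /\ so_u x s.

(* The spectrum Σ(C) is Hausdorff: distinct characters are separated by the
   real or imaginary part of a single coordinate t ↦ t(x).  For a point τ with
   (C, Σ(C)) ∈ τ, the opens u with (C, u) ∈ τ form a completely prime filter on
   Σ(C).  If no character had all its neighbourhoods in τ, the neighbourhoods
   outside τ would cover Σ(C) and complete primality would put one of them in
   τ; so some σ_C does.  An open u ∈ τ missing σ_C is covered by opens each
   disjoint from a neighbourhood of σ_C, so one of them would lie in τ, which
   is impossible since τ is a filter.  Hausdorffness and upward closure along
   restriction likewise give uniqueness of σ_C and σ_C = σ_D|_C.  Conversely,
   a consistent ideal gives a completely prime filter because covers only use
   opens over the same C, and two members meet over a common upper bound D in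
   the intersection of the preimages of their opens. *)
From Stdlib Require Import Reals List Lra Classical FunctionalExtensionality PropExtensionality.
Open Scope R_scope.

Lemma Rabs_le_sqrt_add_sq a b : Rabs a <= sqrt (a * a + b * b).
Proof. rewrite <- sqrt_Rsqr_abs. apply sqrt_le_1_alt. unfold Rsqr. nra. Qed.

Section Spectrum.
Variable A : CStarAlg.

Lemma restr_id (C : A -> Prop) (h : subset C C) (t : sig C -> Cplx) : restr h t = t.
Proof.
  apply functional_extensionality; intros [x hx]; unfold restr; simpl.
  rewrite (proof_irrelevance _ (h x hx) hx). reflexivity.
Qed.

Lemma is_char_one_neq0 (C : A -> Prop) s (C1 : C one) :
  is_char A C s -> s (exist C one C1) <> C0.
Proof.
  intros (_ & _ & Hmul & [x Hx]) E. apply Hx.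
  rewrite (Hmul (exist C one C1) x x) by (simpl; symmetry; apply mul1l).
  rewrite E. unfold Cmul, C0; simpl. f_equal; ring.
Qed.

Lemma is_char_restr (C D : A -> Prop) (h : subset C D) t :
  C one -> is_char A D t -> is_char A C (restr h t).
Proof.
  intros C1 Ht. pose proof (is_char_one_neq0 D t (h _ C1) Ht) as Hne.
  destruct Ht as (Hadd & Hsmul & Hmul & _).
  unfold restr; split; [| split; [| split]].
  - intros x y z E. apply Hadd. exact E.
  - intros a x z E. apply Hsmul. exact E.
  - intros x y z E. apply Hmul. exact E.
  - exists (exist C one C1). exact Hne.
Qed.

Lemma is_open_Spec (C : A -> Prop) : is_open A C (Spec A C).
Proof.
  split; [intros s Hs; exact Hs |].
  intros s _. exists nil, 1. split; [lra |]. intros t Ht _. exact Ht.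
Qed.

Lemma is_open_inter (C : A -> Prop) u v :
  is_open A C u -> is_open A C v -> is_open A C (fun t => u t /\ v t).
Proof.
  intros [Hu_char Hu_nbhd] [_ Hv_nbhd]. split; [intros s [Hs _]; auto |].
  intros s [Hus Hvs].
  destruct (Hu_nbhd s Hus) as (l1 & e1 & He1 & H1).
  destruct (Hv_nbhd s Hvs) as (l2 & e2 & He2 & H2).
  exists (l1 ++ l2), (Rmin e1 e2). split; [apply Rmin_glb_lt; assumption |].
  intros t Ht Hclose. split.
  - apply H1; [exact Ht |]. intros x Hx.
    eapply Rlt_le_trans; [apply Hclose, in_or_app; auto | apply Rmin_l].
  - apply H2; [exact Ht |]. intros x Hx.
    eapply Rlt_le_trans; [apply Hclose, in_or_app; auto | apply Rmin_r].
Qed.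

Lemma is_open_restr_preimage (C D : A -> Prop) (h : subset C D) u :
  C one -> is_open A C u -> is_open A D (fun t => is_char A D t /\ u (restr h t)).
Proof.
  intros C1 [_ Hu_nbhd]. split; [intros s [Hs _]; exact Hs |].
  intros s [Hs Hus]. destruct (Hu_nbhd _ Hus) as (l & e & He & Hl).
  set (incl := fun x : sig C => exist D (proj1_sig x) (h _ (proj2_sig x))).
  exists (map incl l), e. split; [exact He |].
  intros t Ht Hclose. split; [exact Ht |].
  apply Hl; [apply is_char_restr; assumption |].
  intros x Hx. apply (Hclose (incl x)), in_map, Hx.
Qed.

Section CoordinateBalls.
Variable f : Cplx -> R.
Hypothesis f_sub : forall z w, f (Csub z w) = f z - f w.
Hypothesis f_le_Cabs : forall z, Rabs (f z) <= Cabs z.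

Lemma is_open_coord_ball (C : A -> Prop) x c d :
  is_open A C (fun t => is_char A C t /\ Rabs (f (t x) - c) < d).
Proof.
  split; [intros s [Hs _]; exact Hs |].
  intros s [Hs Hd]. exists (x :: nil), (d - Rabs (f (s x) - c)). split; [lra |].
  intros t Ht Hclose. split; [exact Ht |].
  specialize (Hclose x (or_introl eq_refl)).
  pose proof (f_le_Cabs (Csub (t x) (s x))) as Hf. rewrite f_sub in Hf.
  pose proof (Rabs_triang (f (t x) - f (s x)) (f (s x) - c)) as Htri.
  replace (f (t x) - f (s x) + (f (s x) - c)) with (f (t x) - c) in Htri by ring.
  lra.
Qed.

Lemma coord_separated (C : A -> Prop) a b x :
  is_char A C a -> is_char A C b -> f (a x) <> f (b x) ->
  exists V W, is_open A C V /\ is_open A C W /\ V a /\ W b /\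
    forall t, V t -> W t -> False.
Proof.
  intros Ha Hb Hne.
  assert (Hpos : 0 < Rabs (f (a x) - f (b x))) by (apply Rabs_pos_lt; lra).
  set (d := Rabs (f (a x) - f (b x)) / 2).
  exists (fun t => is_char A C t /\ Rabs (f (t x) - f (a x)) < d),
         (fun t => is_char A C t /\ Rabs (f (t x) - f (b x)) < d).
  split; [apply is_open_coord_ball |]. split; [apply is_open_coord_ball |].
  split; [split; [exact Ha | unfold d; rewrite Rminus_diag, Rabs_R0; lra] |].
  split; [split; [exact Hb | unfold d; rewrite Rminus_diag, Rabs_R0; lra] |].
  intros t [_ Hta] [_ Htb]. unfold d in *. rewrite Rabs_minus_sym in Hta.
  pose proof (Rabs_triang (f (a x) - f (t x)) (f (t x) - f (b x))) as Htri.
  replace (f (a x) - f (t x) + (f (t x) - f (b x))) with (f (a x) - f (b x)) in Htri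
    by ring.
  lra.
Qed.

End CoordinateBalls.

Lemma Spec_hausdorff (C : A -> Prop) a b :
  is_char A C a -> is_char A C b -> a <> b ->
  exists V W, is_open A C V /\ is_open A C W /\ V a /\ W b /\
    forall t, V t -> W t -> False.
Proof.
  intros Ha Hb Hne.
  destruct (not_all_ex_not _ _ (fun E => Hne (functional_extensionality _ _ E)))
    as [x Hx].
  destruct (classic (Cre (a x) = Cre (b x))) as [Ere | Nre].
  - destruct (classic (Cim (a x) = Cim (b x))) as [Eim | Nim].
    + destruct (a x), (b x); simpl in *; congruence.
    + apply (coord_separated Cim) with (x := x); try assumption.
      * intros z w. unfold Csub, Cadd, Copp; simpl; ring.
      * intro z. unfold Cabs. rewrite Rplus_comm. apply Rabs_le_sqrt_add_sq.
  - apply (coord_separated Cre) with (x := x); try assumption.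
    + intros z w. unfold Csub, Cadd, Copp; simpl; ring.
    + intro z. apply Rabs_le_sqrt_add_sq.
Qed.

Definition represents (tau : sobj A -> Prop) (C : A -> Prop) (s : sig C -> Cplx) : Prop :=
  is_char A C s /\ (forall u, is_open A C u -> (tau (SObj C u) <-> u s)).

Section Points.
Variable tau : sobj A -> Prop.
Hypothesis Htau : is_point A tau.

Lemma point_upward_restr (C D : A -> Prop) (h : subset C D) u v :
  tau (SObj D v) -> is_comm_sub A C -> is_open A C u ->
  (forall t, v t -> u (restr h t)) -> tau (SObj C u).
Proof.
  intros Hv HC Hu Hvu. pose proof Htau as (_ & _ & Hup & _ & _).
  apply (Hup _ (SObj D v) Hv); [split; assumption |]. exists h. exact Hvu.
Qed.

Lemma point_upward (C : A -> Prop) u v :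
  tau (SObj C u) -> is_open A C v -> (forall t, u t -> v t) -> tau (SObj C v).
Proof.
  intros Hu Hv Huv. pose proof Htau as (Hval & _).
  apply (point_upward_restr C C (fun _ ha => ha) v u Hu (proj1 (Hval _ Hu)) Hv).
  intros t Ht. rewrite restr_id. auto.
Qed.

Lemma point_Spec (x : sobj A) : tau x -> tau (SObj (so_C x) (Spec A (so_C x))).
Proof.
  destruct x as [C u]; intro Hx. pose proof Htau as (Hval & _).
  apply (point_upward C u); [exact Hx | apply is_open_Spec |].
  exact (proj1 (proj2 (Hval _ Hx))).
Qed.

Lemma point_disjoint (C : A -> Prop) V W :
  tau (SObj C V) -> tau (SObj C W) -> (forall t, V t -> W t -> False) -> False.
Proof.
  intros HV HW Hdisj. pose proof Htau as (Hval & _ & _ & Hmeet & Hprime).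
  destruct (Hmeet _ _ HV HW) as (z & Hz & [h1 H1] & [h2 H2]).
  rewrite (proof_irrelevance _ h2 h1) in H2.
  (* no character of z restricts into both V and W, so the empty family covers z *)
  destruct (Hprime z (fun _ => False) Hz) as (y & [] & _).
  split; [exact (Hval _ Hz) |]. split; [intros y [] |]. split; [intros y [] |].
  intros s Hs. destruct (Hdisj (restr h1 s) (H1 s Hs) (H2 s Hs)).
Qed.

Lemma point_cover (C : A -> Prop) u (P : ((sig C -> Cplx) -> Prop) -> Prop) :
  tau (SObj C u) -> (forall w, P w -> is_open A C w) ->
  (forall s, u s -> exists w, P w /\ w s) -> exists w, P w /\ tau (SObj C w).
Proof.
  intros Hu HP Hcov. pose proof Htau as (Hval & _ & _ & _ & Hprime).
  pose proof (proj1 (Hval _ Hu)) as HC.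
  destruct (Hprime _ (fun y => exists w, y = SObj C w /\ P w) Hu)
    as (y & (w & -> & Hw) & Hy); [| exists w; auto].
  split; [exact (Hval _ Hu) |].
  split; [intros y (w & -> & Hw); split; [exact HC | exact (HP w Hw)] |].
  split; [intros y (w & -> & _) a ha; exact ha |].
  intros s Hs. destruct (Hcov s Hs) as (w & Hw & Hws).
  exists (SObj C w). split; [exists w; auto |].
  exists (fun _ ha => ha). simpl. rewrite restr_id. exact Hws.
Qed.

Lemma point_char_exists (C : A -> Prop) :
  tau (SObj C (Spec A C)) -> exists s, represents tau C s.
Proof.
  intro HS.
  assert (Hnbhd : exists s, is_char A C s /\
            forall u, is_open A C u -> u s -> tau (SObj C u)).
  { apply NNPP; intro Hnone.
    destruct (point_cover C (Spec A C) (fun u => is_open A C u /\ ~ tau (SObj C u)) HS)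
      as (u & (_ & Hnot) & Hu); [intros w [Hw _]; exact Hw | | exact (Hnot Hu)].
    intros s Hs. apply NNPP; intro Hno. apply Hnone. exists s. split; [exact Hs |].
    intros u Hu Hus. apply NNPP; intro Hnt. apply Hno. exists u; auto. }
  destruct Hnbhd as (s & Hs & Hnbhd). exists s. split; [exact Hs |].
  intros u Hu. split; [| apply Hnbhd; exact Hu].
  intro Htu. apply NNPP; intro Hnus.
  destruct (point_cover C u (fun w => is_open A C w /\ exists V,
              is_open A C V /\ V s /\ forall t, V t -> w t -> False) Htu)
    as (w & (_ & V & HV & HVs & Hdisj) & Hw); [intros w [Hw _]; exact Hw | |].
  - intros t Ht. assert (Hts : t <> s) by (intros ->; contradiction).
    destruct (Spec_hausdorff C t s (proj1 Hu t Ht) Hs Hts)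
      as (W & V & HW & HV & HWt & HVs & Hd).
    exists (fun r => u r /\ W r).
    split; [split; [apply is_open_inter; assumption |] | split; assumption].
    exists V. split; [exact HV | split; [exact HVs |]].
    intros r Hr [_ Hr']. exact (Hd r Hr' Hr).
  - exact (point_disjoint C V w (Hnbhd V HV HVs) Hw Hdisj).
Qed.

Lemma point_char_unique (C : A -> Prop) s1 s2 :
  represents tau C s1 -> represents tau C s2 -> s1 = s2.
Proof.
  intros [Hs1 Ht1] [Hs2 Ht2]. apply NNPP; intro Hne.
  destruct (Spec_hausdorff C s1 s2 Hs1 Hs2 Hne) as (V & W & HV & HW & HV1 & HW2 & Hd).
  apply (Hd s2); [apply Ht2, Ht1 |]; assumption.
Qed.

Lemma point_char_restr (C D : A -> Prop) (h : subset C D) sC sD :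
  is_comm_sub A C -> represents tau C sC -> represents tau D sD -> restr h sD = sC.
Proof.
  intros HC [HsC HtC] [HsD HtD]. apply NNPP; intro Hne.
  destruct (Spec_hausdorff C _ _ (is_char_restr C D h sD (proj1 HC) HsD) HsC Hne)
    as (V & W & HV & HW & HVs & HWs & Hd).
  apply (point_disjoint C V W); [| apply HtC; assumption | exact Hd].
  apply (point_upward_restr C D h V (fun t => is_char A D t /\ V (restr h t)));
    [| exact HC | exact HV | intros t [_ Ht]; exact Ht].
  apply HtD; [apply is_open_restr_preimage; [exact (proj1 HC) | exact HV] |].
  split; assumption.
Qed.

Lemma point_to_ideal_exists (C : A -> Prop) :
  tau (SObj C (Spec A C)) -> exists s, point_to_ideal A tau (PMO C s).
Proof.
  intro HS. destruct (point_char_exists C HS) as (s & Hs).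
  exists s. split; [exact HS | exact Hs].
Qed.

Lemma point_to_ideal_consistent : consistent_ideal A (point_to_ideal A tau).
Proof.
  pose proof Htau as (Hval & Hinh & _ & Hmeet & _).
  split; [| split; [| split; [| split; [| split]]]].
  - intros p (HS & Hs & _). split; [exact (proj1 (Hval _ HS)) | exact Hs].
  - destruct Hinh as [x Hx].
    destruct (point_to_ideal_exists _ (point_Spec x Hx)) as (s & Hs).
    eexists; exact Hs.
  - intros p C (HS & _) HC h.
    destruct (point_to_ideal_exists C) as (s & Hs).
    + apply (point_upward_restr C (pm_C p) h _ _ HS HC (is_open_Spec C)).
      intros t Ht. exact (is_char_restr C (pm_C p) h t (proj1 HC) Ht).
    + exists (PMO C s). split; [exact Hs | reflexivity].
  - intros p q (HSp & _) (HSq & _).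
    destruct (Hmeet _ _ HSp HSq) as (z & Hz & [hp _] & [hq _]).
    destruct (point_to_ideal_exists _ (point_Spec z Hz)) as (s & Hs).
    exists (PMO (so_C z) s). split; [exact Hs | split; assumption].
  - intros p q (HSp & Hp) (_ & Hq) h _. symmetry.
    exact (point_char_restr _ _ h _ _ (proj1 (Hval _ HSp)) Hp Hq).
  - intros p q (HSp & Hp) (_ & Hq) h. symmetry.
    exact (point_char_restr _ _ h _ _ (proj1 (Hval _ HSp)) Hp Hq).
Qed.

Lemma point_to_idealK x : ideal_to_point A (point_to_ideal A tau) x <-> tau x.
Proof.
  pose proof Htau as (Hval & _). destruct x as [C u]; split.
  - intros (Hu & s & (_ & _ & Hrep) & Hus). apply Hrep; assumption.
  - intro Hx. pose proof (proj2 (Hval _ Hx)) as Hu.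
    destruct (point_to_ideal_exists C (point_Spec _ Hx)) as (s & Hs).
    split; [exact Hu |]. exists s. split; [exact Hs |].
    apply (proj2 (proj2 Hs) u Hu), Hx.
Qed.

End Points.

Section Ideals.
Variable F : pmo A -> Prop.
Hypothesis HF : consistent_ideal A F.

Lemma ideal_restr p (C : A -> Prop) (h : subset C (pm_C p)) :
  F p -> is_comm_sub A C -> F (PMO C (restr h (pm_s p))).
Proof.
  intros Hp HC. pose proof HF as (_ & _ & Hdown & _ & _ & Hcompat).
  destruct (Hdown p C Hp HC h) as ([Cq sq] & Hq & Heq). simpl in Heq.
  assert (Cq = C) as ->.
  { apply functional_extensionality; intro a. apply propositional_extensionality, Heq. }
  pose proof (Hcompat _ _ Hq Hp h) as Hsq. simpl in Hsq. rewrite Hsq in Hq. exact Hq.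
Qed.

Lemma ideal_char_unique (C : A -> Prop) s1 s2 :
  F (PMO C s1) -> F (PMO C s2) -> s1 = s2.
Proof.
  intros H1 H2. pose proof HF as (_ & _ & _ & _ & _ & Hcompat).
  pose proof (Hcompat _ _ H1 H2 (fun _ ha => ha)) as E. simpl in E.
  rewrite restr_id in E. exact E.
Qed.

Lemma ideal_to_point_meet x y :
  ideal_to_point A F x -> ideal_to_point A F y ->
  exists z, ideal_to_point A F z /\ sle A z x /\ sle A z y.
Proof.
  pose proof HF as (Hv & _ & _ & Hdir & _ & Hcompat).
  destruct x as [C u], y as [C' u']. intros (Hu & s & Hs & Hus) (Hu' & s' & Hs' & Hus').
  simpl in *.
  destruct (Hdir _ _ Hs Hs') as ([D r] & Hr & h & h'). simpl in h, h'.
  exists (SObj D (fun t => (is_char A D t /\ u (restr h t)) /\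
                           (is_char A D t /\ u' (restr h' t)))).
  split; [split | split].
  - apply is_open_inter; apply is_open_restr_preimage; try assumption.
    + exact (proj1 (proj1 (Hv _ Hs))).
    + exact (proj1 (proj1 (Hv _ Hs'))).
  - exists r. split; [exact Hr |].
    pose proof (proj2 (Hv _ Hr)) as Hr_char. simpl in Hr_char.
    pose proof (Hcompat _ _ Hs Hr h) as Es. pose proof (Hcompat _ _ Hs' Hr h') as Es'.
    simpl in Es, Es' |- *. rewrite <- Es, <- Es'. auto.
  - exists h. intros t [[_ Ht] _]. exact Ht.
  - exists h'. intros t [_ [_ Ht]]. exact Ht.
Qed.

Lemma is_point_ideal_to_point : is_point A (ideal_to_point A F).
Proof.
  pose proof HF as (Hv & Hinh & _).
  split; [| split; [| split; [| split]]].
  - intros [C u] (Hu & s & Hs & _). split; [exact (proj1 (Hv _ Hs)) | exact Hu].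
  - destruct Hinh as [[C s] Hp]. exists (SObj C (Spec A C)).
    split; [apply is_open_Spec |]. exists s. split; [exact Hp | exact (proj2 (Hv _ Hp))].
  - intros [C u] [D v] (_ & s & Hs & Hvs) [HC Hu] [h Hh]. simpl in *.
    split; [exact Hu |]. exists (restr h s).
    split; [exact (ideal_restr (PMO D s) C h Hs HC) | apply Hh, Hvs].
  - exact ideal_to_point_meet.
  - intros [C u] S (_ & s & Hs & Hus) (_ & HvS & _ & Hcov).
    destruct (Hcov s Hus) as (y & Hy & h & Hyh). exists y. split; [exact Hy |].
    destruct (HvS _ Hy) as [HCy Huy]. destruct y as [Cy uy]; simpl in *.
    split; [exact Huy |]. exists (restr h s). split; [| exact Hyh].
    exact (ideal_restr (PMO C s) Cy h Hs HCy).
Qed.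

Lemma ideal_to_pointK p : point_to_ideal A (ideal_to_point A F) p <-> F p.
Proof.
  pose proof HF as (Hv & _). destruct p as [C s]; unfold point_to_ideal; simpl. split.
  - intros ((_ & s' & Hs' & Hs'_char) & Hs & Hrep).
    apply NNPP; intro Hn. assert (Hne : s <> s') by (intros <-; contradiction).
    destruct (Spec_hausdorff C s s' Hs Hs'_char Hne) as (V & W & HV & HW & HVs & HWs' & Hd).
    destruct (proj2 (Hrep V HV) HVs) as (_ & s'' & Hs'' & HVs'').
    rewrite (ideal_char_unique C s'' s' Hs'' Hs') in HVs''.
    exact (Hd s' HVs'' HWs').
  - intro Hp. destruct (Hv _ Hp) as [_ Hs]; simpl in Hs.
    split; [split; [apply is_open_Spec | exists s; auto] |]. split; [exact Hs |].
    intros u Hu. split.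
    + intros (_ & s' & Hs' & Hus'). rewrite (ideal_char_unique C s s' Hp Hs'). exact Hus'.
    + intro Hus. split; [exact Hu | exists s; auto].
Qed.

End Ideals.
End Spectrum.

Theorem theorem4p3 (A : CStarAlg) :
  (forall tau : sobj A -> Prop, is_point A tau ->
     (forall C : A -> Prop, tau (SObj C (Spec A C)) ->
        exists! s : sig C -> Cplx, is_char A C s /\
          (forall u, is_open A C u -> (tau (SObj C u) <-> u s))) /\
     consistent_ideal A (point_to_ideal A tau) /\
     (forall x, ideal_to_point A (point_to_ideal A tau) x <-> tau x)) /\
  (forall F : pmo A -> Prop, consistent_ideal A F ->
     is_point A (ideal_to_point A F) /\
     (forall p, point_to_ideal A (ideal_to_point A F) p <-> F p)).
Proof.
  split.
  - intros tau Htau. split; [| split].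
    + intros C HS. destruct (point_char_exists A tau Htau C HS) as (s & Hs).
      exists s. split; [exact Hs |].
      intros s' Hs'. exact (point_char_unique A tau C s s' Hs Hs').
    + exact (point_to_ideal_consistent A tau Htau).
    + exact (point_to_idealK A tau Htau).
  - intros F HF. split.
    + exact (is_point_ideal_to_point A F HF).
    + exact (ideal_to_pointK A F HF).
Qed.
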